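(* For all integers $m,n\ge 0$ and every $\sigma>0$, $$0<\Lambda_{m,n}(\sigma)-\Lambda_{m,n}(0)<\frac{4}{r}\sigma .$$
   Context: Fix $r>0$ (the inradius of an equilateral triangle $T$). For integers $m,n\ge0$ and $\sigma\ge0$, let $(L,M,N)$ with $L\in(-\pi/2,0]$ and $M,N\in[0,\pi/2)$ be the unique solution of the system $$\big(2L-M-N-(m+n)\pi\big)\tan L=3r\sigma,\quad \big(2M-N-L+m\pi\big)\tan M=3r\sigma,\quad \big(2N-L-M+n\pi\big)\tan N=3r\sigma .$$ Set $\mu=\frac{2M-N-L}{\pi}+m$, $\nu=\frac{2N-L-M}{\pi}+n$, and $\Lambda_{m,n}(\sigma)=\frac{4\pi^2}{27r^2}(\mu^2+\mu\nu+\nu^2)$. In particular $\Lambda_{m,n}(0)=\frac{4\pi^2}{27r^2}(m^2+mn+n^2)$. (By McCartin's theorem the Robin spectrum of $T$ with parameter $\sigma$ consists of the numbers $\Lambda_{m,n}(\sigma)$, $0\le m\le n$, with $\Lambda_{m,n}$ counted twice for $m<n$ and once for $m=n$.) *)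

From Stdlib Require Import Reals Lra.
Open Scope R_scope.

(* (L,M,N) solves McCartin's Robin system for the equilateral triangle of
   inradius r, Robin parameter sigma, and indices m n, with
   L in (-pi/2, 0], M, N in [0, pi/2). *)
Definition robin_sol (r sigma : R) (m n : nat) (L M N : R) : Prop :=
  - PI / 2 < L <= 0 /\ 0 <= M < PI / 2 /\ 0 <= N < PI / 2 /\
  (2 * L - M - N - (INR m + INR n) * PI) * tan L = 3 * r * sigma /\
  (2 * M - N - L + INR m * PI) * tan M = 3 * r * sigma /\
  (2 * N - L - M + INR n * PI) * tan N = 3 * r * sigma.

Definition mu_of (m : nat) (L M N : R) : R := (2 * M - N - L) / PI + INR m.
Definition nu_of (n : nat) (L M N : R) : R := (2 * N - L - M) / PI + INR n.

Definition Lambda_form (r mu nu : R) : R :=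
  4 * PI ^ 2 / (27 * r ^ 2) * (mu ^ 2 + mu * nu + nu ^ 2).

Definition Lambda_at (r : R) (m n : nat) (L M N : R) : R :=
  Lambda_form r (mu_of m L M N) (nu_of n L M N).

Definition Lambda0 (r : R) (m n : nat) : R := Lambda_form r (INR m) (INR n).

From Stdlib Require Import Reals Lra.
Open Scope R_scope.

(* Write s = 3 r sigma and b = pi mu, c = pi nu; the first equation of the system reads
   (b + c) tan (-L) = s, the other two b tan M = s and c tan N = s.  Hence
   Lambda(sigma) - Lambda(0) = 4/(27 r^2) (Q(b,c) - Q(m pi, n pi)) with
   Q(x,y) = x^2 + xy + y^2.  Expanding around (m pi, n pi) gives a sum of nonnegative
   terms plus Q(b - m pi, c - n pi) > 0; expanding around (b, c) instead bounds the gap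
   by 3 (b M + c N + (b + c)(-L)) <= 9 s, using x <= tan x on [0, pi/2). *)

Lemma id_le_tan x : 0 <= x < PI / 2 -> x <= tan x.
Proof.
  intros [x_ge0 x_lt].
  destruct (Req_dec x 0) as [->|x_neq0]; [rewrite tan_0; lra|].
  destruct (MVT_cor2 tan (fun c => 1 + tan c ^ 2) 0 x) as [c [tan_x_eq c_in]].
  - lra.
  - intros c c_in.
    apply derive_pt_eq_1 with (derivable_pt_tan c ltac:(lra)).
    apply derive_pt_tan.
  - rewrite tan_0 in tan_x_eq.
    assert (0 <= tan c ^ 2) by apply pow2_ge_0.
    nra.
Qed.

Lemma tan_ge_0 x : 0 <= x < PI / 2 -> 0 <= tan x.
Proof. intros x_in; pose proof (id_le_tan x x_in); lra. Qed.

Lemma coef_pos_of_mul_tan k x s :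
  0 <= x < PI / 2 -> 0 < s -> k * tan x = s -> 0 < x /\ 0 < k /\ k * x <= s.
Proof.
  intros x_in s_pos ktan_eq.
  pose proof (tan_ge_0 x x_in) as tan_ge0.
  pose proof (id_le_tan x x_in) as x_le_tan.
  assert (tan_pos : 0 < tan x).
  { destruct tan_ge0 as [|tan_eq0]; [lra|rewrite <- tan_eq0 in ktan_eq; lra]. }
  assert (k_pos : 0 < k) by nra.
  split; [|split]; [|exact k_pos|nra].
  destruct (proj1 x_in) as [|<-]; [lra|rewrite tan_0 in tan_pos; lra].
Qed.

Definition quad (x y : R) : R := x ^ 2 + x * y + y ^ 2.

Lemma quad_pos x y : 0 < x + y -> 0 < quad x y.
Proof. intros; unfold quad; nra. Qed.

Lemma Lambda_at_sub_Lambda0 r m n L M N : r <> 0 ->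
  Lambda_at r m n L M N - Lambda0 r m n =
  4 / (27 * r ^ 2) *
  (quad (2 * M - N - L + INR m * PI) (2 * N - L - M + INR n * PI)
   - quad (INR m * PI) (INR n * PI)).
Proof.
  intros r_neq0.
  pose proof PI_RGT_0.
  unfold Lambda_at, Lambda0, Lambda_form, mu_of, nu_of, quad.
  field; lra.
Qed.

Section RobinGap.

Variables (r sigma : R) (m n : nat) (L M N : R).
Hypotheses (r_pos : 0 < r) (sigma_pos : 0 < sigma)
  (sol : robin_sol r sigma m n L M N).

Let b := 2 * M - N - L + INR m * PI.
Let c := 2 * N - L - M + INR n * PI.
Let gap := quad b c - quad (INR m * PI) (INR n * PI).

Lemma robin_coef_bounds :
  (0 < M /\ 0 < b /\ b * M <= 3 * r * sigma) /\
  (0 < N /\ 0 < c /\ c * N <= 3 * r * sigma) /\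
  (0 < - L /\ 0 < b + c /\ (b + c) * (- L) <= 3 * r * sigma).
Proof.
  destruct sol as [L_in [M_in [N_in [eqL [eqM eqN]]]]].
  assert (s_pos : 0 < 3 * r * sigma) by nra.
  split; [|split]; apply coef_pos_of_mul_tan; try lra; try assumption.
  rewrite tan_neg, <- eqL; unfold b, c; ring.
Qed.

Lemma robin_gap_pos : 0 < gap.
Proof.
  destruct robin_coef_bounds as [[M_pos _] [[N_pos _] [L_neg _]]].
  pose proof PI_RGT_0; pose proof (pos_INR m); pose proof (pos_INR n).
  assert (Q_pos : 0 < quad (2 * M - N - L) (2 * N - L - M)) by (apply quad_pos; lra).
  assert (gap_eq : gap = INR m * PI * (3 * (M - L)) + INR n * PI * (3 * (N - L))
                         + quad (2 * M - N - L) (2 * N - L - M))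
    by (unfold gap, b, c, quad; ring).
  assert (0 <= INR m * PI * (3 * (M - L))) by (apply Rmult_le_pos; nra).
  assert (0 <= INR n * PI * (3 * (N - L))) by (apply Rmult_le_pos; nra).
  lra.
Qed.

Lemma robin_gap_lt : gap < 27 * (r * sigma).
Proof.
  destruct robin_coef_bounds as [[M_pos [_ bM]] [[N_pos [_ cN]] [L_neg [_ bcL]]]].
  assert (Q_pos : 0 < quad (2 * M - N - L) (2 * N - L - M)) by (apply quad_pos; lra).
  assert (gap_eq : gap = 3 * (b * M + c * N + (b + c) * (- L))
                         - quad (2 * M - N - L) (2 * N - L - M))
    by (unfold gap, b, c, quad; ring).
  lra.
Qed.

End RobinGap.

Theorem mainTheorem2 (r : R) (m n : nat) (sigma L M N : R) :
  0 < r -> 0 < sigma ->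
  robin_sol r sigma m n L M N ->
  0 < Lambda_at r m n L M N - Lambda0 r m n < 4 / r * sigma.
Proof.
  intros r_pos sigma_pos sol.
  rewrite Lambda_at_sub_Lambda0 by lra.
  pose proof (robin_gap_pos r sigma m n L M N r_pos sigma_pos sol) as gap_pos.
  pose proof (robin_gap_lt r sigma m n L M N r_pos sigma_pos sol) as gap_lt.
  assert (scale_pos : 0 < 4 / (27 * r ^ 2)) by (apply Rdiv_lt_0_compat; nra).
  replace (4 / r * sigma) with (4 / (27 * r ^ 2) * (27 * (r * sigma))) by (field; lra).
  split; [apply Rmult_lt_0_compat | apply Rmult_lt_compat_l]; assumption.
Qed.
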